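(* For a commutative ring $R$ the following are equivalent: (i) $R$ is a GPP-ring; (ii) $R$ is a GPF-ring and $T(R)$ is zero-dimensional; (iii) $T(R)$ is zero-dimensional and for every multiplicative subset $S\subseteq R$ and every idempotent $x\in S^{-1}R$ there is an idempotent $e\in R$ with $e/1=x$; (iv) $T(R)$ is zero-dimensional and for every idempotent $x\in T(R)$ there is an idempotent $e\in R$ with $e/1=x$.
   Context: A commutative ring $A$ is a GPP-ring (resp. GPF-ring) if for each $f\in A$ there exists $n\geq 1$ such that $Af^n$ is a projective (resp. flat) $A$-module. $T(R)$ denotes the total ring of fractions of $R$ (localization at the set of non-zero-divisors). Zero-dimensional means Krull dimension $0$. *)

From HB Require Import structures.
From mathcomp Require Import all_boot all_order all_algebra.
Set Implicit Arguments. Unset Strict Implicit. Unset Printing Implicit Defensive.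
Import GRing.Theory.
Local Open Scope ring_scope.

Section Defs.
Variable R : comPzRingType.

Definition princ_pow (f : R) (n : nat) (x : R) : Prop := exists a : R, x = a * f ^+ n.

(* An R-linear map from the submodule I of R (given by a predicate) into M:
   only its values on I matter. *)
Definition hom_on (I : R -> Prop) (M : lmodType R) (phi : R -> M) : Prop :=
  (forall x y, I x -> I y -> phi (x + y) = phi x + phi y) /\
  (forall a x, I x -> phi (a * x) = a *: phi x).

Definition projective_ideal (I : R -> Prop) : Prop :=
  forall (M N : lmodType R) (g : {linear M -> N}),
    (forall y : N, exists x : M, g x = y) ->
    forall phi : R -> N, hom_on I phi ->
    exists psi : R -> M, hom_on I psi /\ forall x, I x -> g (psi x) = phi x.

(* Flatness of the submodule I of R, via the equational criterion
   (Bourbaki / Lazard; definition used e.g. by Lombardi-Quitte):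
   every relation in I is trivial. *)
Definition flat_ideal (I : R -> Prop) : Prop :=
  forall (r : nat) (a x : 'I_r -> R),
    (forall i, I (x i)) -> \sum_(i < r) a i * x i = 0 ->
    exists (s : nat) (y : 'I_s -> R) (b : 'I_r -> 'I_s -> R),
      (forall j, I (y j)) /\
      (forall i, x i = \sum_(j < s) b i j * y j) /\
      (forall j, \sum_(i < r) a i * b i j = 0).

Definition GPP_ring : Prop :=
  forall f : R, exists n : nat, (1 <= n)%N /\ projective_ideal (princ_pow f n).

Definition GPF_ring : Prop :=
  forall f : R, exists n : nat, (1 <= n)%N /\ flat_ideal (princ_pow f n).

Definition mult_subset (S : R -> Prop) : Prop :=
  S 1 /\ forall a b, S a -> S b -> S (a * b).

Definition nzd (s : R) : Prop := forall x : R, s * x = 0 -> x = 0.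

(* ---- The localization S^{-1}R, presented by fractions (r, s) with s in S ---- *)
Definition frac := (R * R)%type.
Definition valid (S : R -> Prop) (p : frac) : Prop := S p.2.
Definition loc_eq (S : R -> Prop) (p q : frac) : Prop :=
  exists u, S u /\ u * (p.1 * q.2 - q.1 * p.2) = 0.
Definition fadd (p q : frac) : frac := (p.1 * q.2 + q.1 * p.2, p.2 * q.2).
Definition fmul (p q : frac) : frac := (p.1 * q.1, p.2 * q.2).
Definition fone : frac := (1, 1).
Definition fzero : frac := (0, 1).
Definition fcan (r : R) : frac := (r, 1).

Definition loc_idem (S : R -> Prop) (p : frac) : Prop := loc_eq S (fmul p p) p.

(* Ideals of S^{-1}R, described as (well-defined) predicates on fractions. *)
Definition loc_ideal (S : R -> Prop) (I : frac -> Prop) : Prop :=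
  (forall p q, valid S p -> valid S q -> loc_eq S p q -> I p -> I q) /\
  I fzero /\
  (forall p q, valid S p -> valid S q -> I p -> I q -> I (fadd p q)) /\
  (forall p q, valid S p -> valid S q -> I q -> I (fmul p q)).

Definition loc_prime (S : R -> Prop) (P : frac -> Prop) : Prop :=
  loc_ideal S P /\ ~ P fone /\
  forall p q, valid S p -> valid S q -> P (fmul p q) -> P p \/ P q.

Definition loc_maximal (S : R -> Prop) (P : frac -> Prop) : Prop :=
  loc_ideal S P /\ ~ P fone /\
  forall J, loc_ideal S J -> (forall p, valid S p -> P p -> J p) ->
    J fone \/ (forall p, valid S p -> J p -> P p).

Definition loc_zero_dim (S : R -> Prop) : Prop :=
  forall P, loc_prime S P -> loc_maximal S P.

Definition idem_lift (S : R -> Prop) : Prop :=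
  forall p, valid S p -> loc_idem S p ->
    exists e : R, e * e = e /\ loc_eq S (fcan e) p.

End Defs.

(* R c is projective exactly when Ann(c) = R e for an idempotent e, so R is a
   GPP-ring iff every f has a power f^n whose annihilator is generated by an
   idempotent.  T(R) (more generally S^-1 R) is zero-dimensional iff every a is
   pi-regular there, i.e. t a^n = c a^(n+1) with t in S; the hard direction uses
   a prime of R avoiding the multiplicative set of all a^n (t - a c).
   Pi-regularity gives, for large N, some z with z f^N = 0 and z + w f^N a
   non-zero-divisor; an idempotent generator of Ann(f^N) is then produced either
   by flatness of R f^N applied to the relation z f^N = 0, or by lifting the
   idempotent w f^N / (z + w f^N) of T(R).  Conversely, an idempotent r/s of
   S^-1 R splits u s s into the orthogonal elements u s r and u s (s - r), and
   1 - e, where Ann((u s r)^n) = R e, lifts r/s. *)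

From HB Require Import structures.
From mathcomp Require Import all_boot all_order all_algebra ring.
From mathcomp Require Import boolp classical_sets.
Set Implicit Arguments. Unset Strict Implicit. Unset Printing Implicit Defensive.
Import GRing.Theory.
Local Open Scope ring_scope.

Section PrincipalIdealModule.
Variables (R : comPzRingType) (c : R).

Definition principal_mem : {pred R^o} := fun x => `[< exists a, x = a * c >].

Lemma principal_memP x : reflect (exists a, x = a * c) (x \in principal_mem).
Proof. exact: asboolP. Qed.

Lemma principal_subsemimod_closed : subsemimod_closed principal_mem.
Proof.
split; first split.
- by apply/principal_memP; exists 0; rewrite mul0r.
- move=> _ _ /principal_memP[a ->] /principal_memP[b ->].
  by apply/principal_memP; exists (a + b); rewrite mulrDl.
- move=> r _ /principal_memP[a ->].
  by apply/principal_memP; exists (r * a); rewrite -mulrA.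
Qed.

HB.instance Definition _ :=
  GRing.isSubmodClosed.Build R R^o principal_mem principal_subsemimod_closed.

Record principal := Principal { principal_val : R^o; _ : principal_val \in principal_mem }.
HB.instance Definition _ := [isSub for principal_val].
HB.instance Definition _ := [Choice of principal by <:].
HB.instance Definition _ := [SubChoice_isSubLmodule of principal by <:].

Definition principal_gen (a : R^o) : principal :=
  Principal (introT (principal_memP _) (ex_intro _ a erefl)).
Lemma principal_gen_linear : linear principal_gen.
Proof. by move=> r a b; apply: val_inj; rewrite /= mulrDl -mulrA. Qed.

HB.instance Definition _ :=
  GRing.isLinear.Build R R^o principal *:%R principal_gen principal_gen_linear.

End PrincipalIdealModule.

Lemma mult_subsetX (R : comPzRingType) (S : R -> Prop) s n :
  mult_subset S -> S s -> S (s ^+ n).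
Proof.
by move=> [S1 SM] Ss; elim: n => [|n IHn]; rewrite ?expr0 // exprS; apply: SM.
Qed.

Section NonZeroDivisors.
Variable R : comPzRingType.

Lemma mult_subset_nzd : mult_subset (@nzd R).
Proof. by split=> [x|s t sn tn x]; rewrite ?mul1r // -mulrA => /sn /tn. Qed.

Lemma nzdX (s : R) n : nzd s -> nzd (s ^+ n).
Proof. exact: mult_subsetX mult_subset_nzd. Qed.

Lemma loc_eq_nzdP (p q : frac R) : loc_eq (@nzd R) p q <-> p.1 * q.2 = q.1 * p.2.
Proof.
split=> [[u [un /un /eqP]]|pq]; first by rewrite subr_eq0 => /eqP.
by exists 1; split; [case: mult_subset_nzd | rewrite pq subrr mulr0].
Qed.

End NonZeroDivisors.

Section AnnihilatorIdempotent.
Variable R : comPzRingType.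
Implicit Types a b c e g x : R.

Definition ann_idem c e := [/\ e * e = e, e * c = 0 & forall a, a * c = 0 -> a * e = a].

Lemma ann_idem_complement c g :
  g * c = c -> (forall a, a * c = 0 -> a * g = 0) -> ann_idem c (1 - g).
Proof.
move=> gc ann_g; have gc0 : (1 - g) * c = 0 by rewrite mulrBl mul1r gc subrr.
by split=> // [|a ac]; rewrite mulrBr mulr1 ann_g // subr0.
Qed.

Lemma projective_ann_idem c :
  projective_ideal (fun x => exists a, x = a * c) -> exists e, ann_idem c e.
Proof.
move=> projc.
have gen_onto (y : principal c) : exists a : R^o, principal_gen c a = y.
  case: y => y yc; case/principal_memP: (yc) => a ya.
  by exists a; apply: val_inj; rewrite /= ya.
pose phi x : principal c := insubd 0 x.
have phiK x : (exists a, x = a * c) -> val (phi x) = x.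
  by move=> cx; rewrite val_insubd ifT //; apply/principal_memP.
have phi_hom : hom_on (fun x => exists a, x = a * c) phi.
  split=> [x y cx cy | r x cx]; apply: val_inj.
  - rewrite raddfD /= !phiK //; case: cx cy => [a ->] [b ->].
    by exists (a + b); rewrite mulrDl.
  - rewrite linearZ /= !phiK //; case: cx => [a ->].
    by exists (r * a); rewrite mulrA.
have [psi [[_ psiZ] psiK]] := projc _ _ (principal_gen c) gen_onto phi phi_hom.
have cc : exists a, c = a * c by exists 1; rewrite mul1r.
have psi0 : psi 0 = 0 by have := psiZ 0 c cc; rewrite mul0r scale0r.
exists (1 - psi c); apply: ann_idem_complement.
- by have := congr1 val (psiK c cc); rewrite phiK.
- by move=> a ac; have := psiZ a c cc; rewrite ac psi0 => /esym.
Qed.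

Lemma ann_idem_projective c e :
  ann_idem c e -> projective_ideal (fun x => exists a, x = a * c).
Proof.
move=> [_ ec ann_e] M N g g_onto phi [_ phiZ].
have [m gm] := g_onto (phi c).
have lift_wd a b : a * c = b * c -> a * (1 - e) = b * (1 - e).
  move=> abc; apply/eqP; rewrite -subr_eq0 -mulrBl mulrBr mulr1.
  by rewrite ann_e ?subrr // mulrBl abc subrr.
pose psi x : M :=
  if pselect (exists a, x = a * c) is left cx then (projT1 (cid cx) * (1 - e)) *: m else 0.
have psiE a : psi (a * c) = (a * (1 - e)) *: m.
  rewrite /psi; case: pselect => [cx|[]]; last by exists a.
  by case: (cid cx) => b /= /lift_wd ->.
exists psi; split; first split.
- by move=> _ _ [a ->] [b ->]; rewrite -mulrDl !psiE mulrDl scalerDl.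
- by move=> r _ [a ->]; rewrite mulrA !psiE scalerA mulrA.
- move=> _ [a ->]; rewrite psiE linearZ /= gm -phiZ; last by exists 1; rewrite mul1r.
  by rewrite -mulrA mulrBl mul1r ec subr0.
Qed.

Lemma projective_principalP c :
  projective_ideal (fun x => exists a, x = a * c) <-> exists e, ann_idem c e.
Proof. by split=> [/projective_ann_idem | [e /ann_idem_projective]]. Qed.

Lemma ann_idem_flat c e : ann_idem c e -> flat_ideal (fun x => exists a, x = a * c).
Proof.
move=> [_ ec ann_e] r a x /choice[d xE] sum0.
exists 1%N, (fun _ => c), (fun i _ => d i * (1 - e)); split; last split.
- by move=> _; exists 1; rewrite mul1r.
- by move=> i; rewrite big_ord1 xE -mulrA mulrBl mul1r ec subr0.
- move=> _; have ad0 : (\sum_(i < r) a i * d i) * c = 0.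
    by rewrite -[RHS]sum0 mulr_suml; apply: eq_bigr => i _; rewrite xE mulrA.
  under eq_bigr do rewrite mulrA; rewrite -mulr_suml.
  by rewrite mulrBr mulr1 ann_e // subrr.
Qed.

Definition ann_add_nzd c := exists z w, z * c = 0 /\ nzd (z + w * c).

Lemma flat_ann_idem c :
  flat_ideal (fun x => exists a, x = a * c) -> ann_add_nzd c -> exists e, ann_idem c e.
Proof.
move=> flat_c [z [w [zc sn]]].
have cc : exists a, c = a * c by exists 1; rewrite mul1r.
have := flat_c 1%N (fun _ => z) (fun _ => c) (fun _ => cc).
rewrite big_ord1 => /(_ zc) [s [y [b [/choice[d yE] [cE zb]]]]].
pose g := \sum_(j < s) b ord0 j * d j.
exists (1 - g); apply: ann_idem_complement.
- by rewrite [RHS](cE ord0) mulr_suml; apply: eq_bigr => j _; rewrite yE mulrA.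
- have zg : z * g = 0.
    rewrite mulr_sumr big1 // => j _.
    by rewrite mulrA; have := zb j; rewrite big_ord1 => ->; rewrite mul0r.
  move=> a ac; apply: sn.
  have -> : (z + w * c) * (a * g) = a * (z * g) + w * (a * c) * g by ring.
  by rewrite zg ac mulr0 mulr0 mul0r addr0.
Qed.

Lemma idem_lift_ann_idem c :
  idem_lift (@nzd R) -> ann_add_nzd c -> exists e, ann_idem c e.
Proof.
move=> lift [z [w [zc sn]]]; set s := z + w * c in sn.
have ws : w * c * s = w * c * (w * c).
  by rewrite /s mulrDr [w * c * z]mulrAC -(mulrA w z c) zc mulr0 add0r.
have [|e [ee /loc_eq_nzdP /= es]] := lift (w * c, s) sn.
  by apply/loc_eq_nzdP; rewrite /= -ws mulrA.
rewrite mulr1 in es.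
exists (1 - e); apply: ann_idem_complement.
- apply/eqP; rewrite -subr_eq0; apply/eqP/sn.
  have -> : s * (e * c - c) = e * s * c - s * c by ring.
  by rewrite es /s mulrDl zc add0r subrr.
- move=> a ac; apply: sn.
  have -> : s * (a * e) = a * (e * s) by ring.
  by rewrite es mulrCA ac mulr0.
Qed.

Lemma ann_idem_ann_add_nzd c e : ann_idem c e -> ann_add_nzd c.
Proof.
move=> [ee ec ann_e]; exists e, 1; split=> // x; rewrite mul1r => ecx.
have ex : e * x = 0.
  by have := congr1 (fun y => e * y) ecx; rewrite mulr0 mulrA mulrDr ec ee addr0.
have /ann_e : x * c = 0 by rewrite mulrC -ecx mulrDl ex add0r.
by rewrite mulrC ex.
Qed.

Lemma exprDn_orth a b n : a * b = 0 -> (a + b) ^+ n.+1 = a ^+ n.+1 + b ^+ n.+1.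
Proof.
move=> ab; elim: n => [|n IHn]; first by rewrite !expr1.
rewrite exprS IHn mulrDl !mulrDr -!exprS.
have -> : a * b ^+ n.+1 = 0 by rewrite exprS mulrA ab mul0r.
have -> : b * a ^+ n.+1 = 0 by rewrite exprS mulrA (mulrC b) ab mul0r.
by rewrite addr0 add0r.
Qed.

Lemma ann_idem_orth a b e n :
  a * b = 0 -> ann_idem (a ^+ n.+1) e -> (a + b) ^+ n.+1 * (1 - e) = a ^+ n.+1.
Proof.
move=> ab [_ ea ann_e]; have be : b ^+ n.+1 * e = b ^+ n.+1.
  by apply: ann_e; rewrite -exprMn mulrC ab expr0n.
by rewrite exprDn_orth // mulrBr mulr1 mulrDl be mulrC ea add0r addrK.
Qed.

End AnnihilatorIdempotent.

Definition pow_ann_idem (R : comPzRingType) :=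
  forall f : R, exists n, (0 < n)%N /\ exists e, ann_idem (f ^+ n) e.

Lemma GPP_ringP (R : comPzRingType) : GPP_ring R <-> pow_ann_idem R.
Proof.
split=> GPP f; have [n [n_gt0 fn]] := GPP f; exists n; split=> //;
  exact/projective_principalP.
Qed.

(* (a/1)^n lies in (a/1)^(n+1) S^-1 R; the denominator and the witness of
   loc_eq are absorbed into t. *)
Definition loc_pi_regular (R : comPzRingType) (S : R -> Prop) :=
  forall a : R, exists n c t, S t /\ t * a ^+ n = c * a ^+ n.+1.

Section PowAnnIdem.
Variable R : comPzRingType.
Implicit Types a c t : R.

Lemma pi_regular_powX t c a n N j : t * a ^+ n = c * a ^+ n.+1 -> (n <= N)%N ->
  t ^+ j * a ^+ N = c ^+ j * a ^+ (N + j).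
Proof.
move=> tcan nN; have tcaN k : (n <= k)%N -> t * a ^+ k = c * a ^+ k.+1.
  by move=> nk; rewrite -(subnKC nk) exprD mulrA tcan -mulrA -exprD addSn.
elim: j => [|j IHj]; first by rewrite !expr0 !mul1r addn0.
by rewrite exprS -mulrA IHj mulrCA tcaN ?(leq_trans nN (leq_addr _ _)) // mulrA -exprSr addnS.
Qed.

Lemma pi_regular_ann_add_nzd t c a n N : nzd t -> t * a ^+ n = c * a ^+ n.+1 ->
  (n <= N)%N -> ann_add_nzd (a ^+ N).
Proof.
move=> tn tcan nN; exists (t ^+ N - c ^+ N * a ^+ N), (c ^+ N); split.
- by rewrite mulrBl (pi_regular_powX N tcan nN) exprD !mulrA subrr.
- by rewrite subrK; apply: nzdX.
Qed.

Lemma ann_add_nzd_pi_regular a n : (0 < n)%N -> ann_add_nzd (a ^+ n) ->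
  exists c t, nzd t /\ t * a ^+ n = c * a ^+ n.+1.
Proof.
case: n => // n _ [z [w [za sn]]]; exists (w * a ^+ n), (z + w * a ^+ n.+1); split=> //.
by rewrite mulrDl za add0r -!mulrA -!exprD addSn !addnS.
Qed.

Lemma pow_ann_idem_pi_regular : pow_ann_idem R -> loc_pi_regular (@nzd R).
Proof.
move=> GPP a; have [n [n_gt0 [e /ann_idem_ann_add_nzd]]] := GPP a.
by move=> /(ann_add_nzd_pi_regular n_gt0) [c [t [tn tcan]]]; exists n, c, t.
Qed.

Lemma pow_ann_idem_GPF : pow_ann_idem R -> GPF_ring R.
Proof. by move=> GPP f; have [n [n_gt0 [e /ann_idem_flat]]] := GPP f; exists n. Qed.

Lemma GPF_pi_regular_pow_ann_idem :
  GPF_ring R -> loc_pi_regular (@nzd R) -> pow_ann_idem R.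
Proof.
move=> GPF PR f; have [n [c [t [tn tcan]]]] := PR f.
have [m [m_gt0 flat_m]] := GPF (f ^+ n.+1); rewrite /princ_pow -exprM in flat_m.
exists (n.+1 * m)%N; split; first by rewrite muln_gt0.
apply: flat_ann_idem flat_m _; apply: pi_regular_ann_add_nzd tn tcan _.
by rewrite (leq_trans (leqnSn n)) // leq_pmulr.
Qed.

Lemma idem_lift_pi_regular_pow_ann_idem :
  idem_lift (@nzd R) -> loc_pi_regular (@nzd R) -> pow_ann_idem R.
Proof.
move=> lift PR f; have [n [c [t [tn tcan]]]] := PR f.
exists n.+1; split=> //; apply: idem_lift_ann_idem lift _.
exact: pi_regular_ann_add_nzd tn tcan (leqnSn n).
Qed.

Lemma pow_ann_idem_idem_lift (S : R -> Prop) : mult_subset S -> pow_ann_idem R -> idem_lift S.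
Proof.
move=> S_mult GPP [r s] /= Ss [u [Su /= idem_rs]].
set a := u * s * r; set b := u * s * (s - r).
have a_sr : a * (s - r) = 0.
  by rewrite -[RHS]oppr0 -idem_rs /a; ring.
have ab : a * b = 0 by rewrite /b mulrCA a_sr mulr0.
have br : b * r = 0 by rewrite /b -mulrA (mulrC _ r) mulrA a_sr.
have [[|n] [//= _ [e ann_e]]] := GPP a.
exists (1 - e); split.
  by case: ann_e => ee _ _; rewrite mulrBl mul1r mulrBr mulr1 ee subrr subr0.
exists ((a + b) ^+ n.+1); split.
  apply: mult_subsetX => //; have -> : a + b = u * s * s by rewrite /a /b; ring.
  by case: S_mult => _ SM; apply: (SM); first apply: (SM).
have an0 : a ^+ n.+1 * (s - r) = 0 by rewrite exprSr -mulrA a_sr mulr0.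
have bn0 : b ^+ n.+1 * r = 0 by rewrite exprSr -mulrA br mulr0.
rewrite /= mulr1 mulrBr mulrA ann_idem_orth // exprDn_orth // mulrDl.
by rewrite opprD addrA -mulrBr an0 bn0 subr0.
Qed.

End PowAnnIdem.

Section PrimeAvoidance.
Local Open Scope classical_set_scope.
Variable R : comPzRingType.

Definition is_ideal (Q : R -> Prop) :=
  [/\ Q 0, forall x y, Q x -> Q y -> Q (x + y) & forall r x, Q x -> Q (r * x)].

Definition is_prime_ideal (Q : R -> Prop) :=
  [/\ is_ideal Q, ~ Q 1 & forall x y, Q (x * y) -> Q x \/ Q y].

Lemma exists_prime_avoiding (Sg : R -> Prop) : mult_subset Sg -> ~ Sg 0 ->
  exists2 Q, is_prime_ideal Q & forall x, Q x -> ~ Sg x.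
Proof.
move=> [Sg1 SgM] nSg0.
pose avoiding (A : set R) := [/\ forall x y, A x -> A y -> A (x + y),
  forall r x, A x -> A (r * x) & forall x, A x -> ~ Sg x].
have [Q [[QD QM QSg] Qmax]] : exists Q, avoiding Q /\ forall B, Q `<` B -> ~ avoiding B.
  apply: Zorn_bigcup => F Favoid Ftot; split.
  - move=> x y [X FX Xx] [Y FY Yy].
    have [XY|YX] := Ftot X Y FX FY.
    + by exists Y => //; case: (Favoid Y FY) => YD _ _; apply: YD => //; apply: XY.
    + by exists X => //; case: (Favoid X FX) => XD _ _; apply: XD => //; apply: YX.
  - by move=> r x [X FX Xx]; exists X => //; case: (Favoid X FX) => _ XM _; apply: XM.
  - by move=> x [X FX Xx]; case: (Favoid X FX) => _ _; apply.
have Q0 : Q 0.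
  apply: contrapT => nQ0; apply: (Qmax [set 0]); last first.
    by split=> [_ _ -> ->|r _ ->|_ ->]; rewrite ?addr0 ?mulr0.
  split=> [z Qz|/(_ 0 erefl) //]; exfalso; apply: nQ0.
  by rewrite -(mul0r z); apply: QM.
have meets x : ~ Q x -> exists q r, Q q /\ Sg (q + x * r).
  move=> nQx; apply: contrapT => nmeet.
  apply: (Qmax [set z | exists q r, Q q /\ z = q + x * r]).
    split=> [z Qz|sub]; first by exists z, 0; rewrite mulr0 addr0.
    by apply: nQx; apply: sub; exists 0, 1; rewrite mulr1 add0r.
  split.
  - move=> _ _ [q1 [r1 [Qq1 ->]]] [q2 [r2 [Qq2 ->]]].
    by exists (q1 + q2), (r1 + r2); split; [exact: QD | ring].
  - move=> r _ [q [r1 [Qq ->]]].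
    by exists (r * q), (r * r1); split; [exact: QM | ring].
  - by move=> _ [q [r [Qq ->]]] Sgz; apply: nmeet; exists q, r.
exists Q => //; split=> //; first by move/QSg.
move=> x y Qxy; apply: contrapT => /not_orP[/meets[q1 [r1 [Qq1 Sgx]]]].
move=> /meets[q2 [r2 [Qq2 Sgy]]]; apply: QSg (SgM _ _ Sgx Sgy).
have -> : (q1 + x * r1) * (q2 + y * r2) =
  (q2 + y * r2) * q1 + (x * r1) * q2 + (r1 * r2) * (x * y) by ring.
by apply: (QD); [apply: (QD)|]; apply: (QM).
Qed.

End PrimeAvoidance.

Section LocalizationZeroDim.
Variables (R : comPzRingType) (S : R -> Prop).
Hypothesis S_mult : mult_subset S.

Lemma loc_eq_cross (p q : frac R) : p.1 * q.2 = q.1 * p.2 -> loc_eq S p q.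
Proof. by move=> pq; exists 1; split; [case: S_mult | rewrite pq subrr mulr0]. Qed.

Lemma loc_prime_pow P a s k : loc_prime S P -> S s -> P (a ^+ k, s ^+ k) -> P (a, s).
Proof.
move=> [_ [P1 Pprime]] Ss; elim: k => [|k IHk]; first by rewrite !expr0 => /P1.
rewrite !exprS => Pk.
by have [|/IHk] := Pprime (a, s) (a ^+ k, s ^+ k) Ss (mult_subsetX k S_mult Ss) Pk.
Qed.

Lemma pi_regular_loc_zero_dim : loc_pi_regular S -> loc_zero_dim S.
Proof.
move=> PR P Pprime; have [Pideal [P1 Pprime']] := Pprime; have [Pwd [P0 _]] := Pideal.
split=> //; split=> // J [Jwd [_ [Jadd Jmul]]] PJ.
have [|/existsNP[[a s] /not_implyP[/= Ss /not_implyP[Jas nPas]]]] :=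
  pselect (forall p, valid S p -> J p -> P p); first by right.
left; have [n [c [t [St tcan]]]] := PR a.
have [S1 SM] := S_mult; have Ssn := mult_subsetX n S_mult Ss.
have PY : P (t - a * c, t).
  have : P (fmul (a ^+ n, s ^+ n) (t - a * c, t)).
    apply: (Pwd (fzero R) (fmul (a ^+ n, s ^+ n) (t - a * c, t)) S1 (SM _ _ Ssn St) _ P0).
    by apply: loc_eq_cross; rewrite /= mul0r mulr1 mulrBr mulrC tcan exprS; ring.
  case/(Pprime' (a ^+ n, s ^+ n) (t - a * c, t) Ssn St) => [Pan|//].
  by case: nPas; apply: loc_prime_pow Pprime Ss Pan.
have Jsum : J (fadd (t - a * c, t) (fmul (c * s, t) (a, s))).
  by apply: Jadd => //; [exact: SM | exact: PJ | exact: Jmul].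
apply: (Jwd _ (fone R) _ S1 _ Jsum).
- by rewrite /valid /=; apply: (SM) => //; apply: SM.
- by apply: loc_eq_cross => /=; ring.
Qed.

Lemma loc_prime_of_prime_ideal Q : is_prime_ideal Q -> (forall s, S s -> ~ Q s) ->
  loc_prime S (fun p => Q p.1).
Proof.
move=> [[Q0 QD QM] nQ1 Qprime] QS.
have Qsat s x : S s -> Q (s * x) -> Q x by move=> Ss /Qprime[/QS|].
split; last split=> //; last by move=> p q _ _ /Qprime.
split; last split=> //; last split.
- move=> p q p2 _ [u [Su pq]] Qp; apply: (Qsat (u * p.2)).
    by case: S_mult => _ SM; apply: SM.
  have -> : u * p.2 * q.1 = u * q.2 * p.1 - u * (p.1 * q.2 - q.1 * p.2) by ring.
  by rewrite pq subr0; apply: QM.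
- by move=> p q _ _ Qp Qq; apply: QD; rewrite mulrC; apply: QM.
- by move=> p q _ _ Qq; apply: QM.
Qed.

Lemma loc_ideal_add_principal Q a : is_ideal Q ->
  loc_ideal S (fun p => exists t r, S t /\ Q (t * p.1 - a * r)).
Proof.
move=> [Q0 QD QM]; have [S1 SM] := S_mult.
split; last split; last split.
- move=> p q p2 _ [u [Su pq]] [t [r [St Qt]]].
  exists (t * (u * p.2)), (r * (u * q.2)); split; first by apply: (SM) => //; apply: SM.
  have -> : t * (u * p.2) * q.1 - a * (r * (u * q.2)) =
    u * q.2 * (t * p.1 - a * r) - t * (u * (p.1 * q.2 - q.1 * p.2)) by ring.
  by rewrite pq mulr0 subr0; apply: QM.
- by exists 1, 0; split=> //; rewrite /= !mulr0 subrr.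
- move=> p q p2 q2 [t [r [St Qt]]] [t' [r' [St' Qt']]].
  exists (t * t'), (r * t' * q.2 + r' * t * p.2); split; first exact: SM.
  have -> : t * t' * (fadd p q).1 - a * (r * t' * q.2 + r' * t * p.2) =
    t' * q.2 * (t * p.1 - a * r) + t * p.2 * (t' * q.1 - a * r') by rewrite /=; ring.
  by apply: QD; apply: QM.
- move=> p q _ _ [t [r [St Qt]]]; exists t, (p.1 * r); split=> //.
  have -> : t * (fmul p q).1 - a * (p.1 * r) = p.1 * (t * q.1 - a * r) by rewrite /=; ring.
  exact: QM.
Qed.

Lemma loc_zero_dim_pi_regular : loc_zero_dim S -> loc_pi_regular S.
Proof.
move=> ZD a; have [S1 SM] := S_mult.
pose Sig x := exists n c t, S t /\ x = a ^+ n * (t - a * c).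
have [[n [c [t [St Sig0]]]]|nSig0] := pselect (Sig 0).
  exists n, c, t; split=> //; apply/eqP; rewrite -subr_eq0; apply/eqP.
  by rewrite Sig0 exprS; ring.
have Sig_mult : mult_subset Sig.
  split; first by exists 0%N, 0, 1; split=> //; rewrite expr0; ring.
  move=> _ _ [n [c [t [St ->]]]] [m [d [u [Su ->]]]].
  exists (n + m)%N, (c * u + t * d - a * c * d), (t * u); split; first exact: SM.
  by rewrite exprD; ring.
have [Q [Qideal nQ1 Qprime] QSig] := exists_prime_avoiding Sig_mult nSig0.
have QS s : S s -> ~ Q s.
  by move=> Ss Qs; apply: (QSig s Qs); exists 0%N, 0, s; split=> //; rewrite expr0; ring.
have [_ [_ Pmax]] := ZD _ (loc_prime_of_prime_ideal (And3 Qideal nQ1 Qprime) QS).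
have [Q0 _ _] := Qideal.
pose J (p : frac R) := exists t r, S t /\ Q (t * p.1 - a * r).
have PJ p : valid S p -> Q p.1 -> J p.
  by move=> _ Qp; exists 1, 0; split=> //; rewrite mul1r mulr0 subr0.
have [[t [r [St Qt]]]|JP] := Pmax J (loc_ideal_add_principal a Qideal) PJ.
  by case: (QSig _ Qt); exists 0%N, r, t; split=> //=; rewrite expr0; ring.
have Ja : J (a, 1) by exists 1, 1; split=> //=; rewrite mul1r mulr1 subrr.
by case: (QSig a (JP (a, 1) S1 Ja)); exists 1%N, 0, 1; split=> //; rewrite expr1; ring.
Qed.

Lemma loc_zero_dimP : loc_zero_dim S <-> loc_pi_regular S.
Proof. by split=> [/loc_zero_dim_pi_regular | /pi_regular_loc_zero_dim]. Qed.

End LocalizationZeroDim.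

Theorem theorem3p3 (R : comPzRingType) :
  let T := @nzd R in
  (GPP_ring R <-> (GPF_ring R /\ loc_zero_dim T)) /\
  (GPP_ring R <->
     (loc_zero_dim T /\ forall S : R -> Prop, mult_subset S -> idem_lift S)) /\
  (GPP_ring R <-> (loc_zero_dim T /\ idem_lift T)).
Proof.
move=> T; rewrite /T GPP_ringP (loc_zero_dimP (@mult_subset_nzd R)).
split; [|split]; split.
- by move=> GPP; split; [exact: pow_ann_idem_GPF | exact: pow_ann_idem_pi_regular].
- by move=> [GPF PR]; exact: GPF_pi_regular_pow_ann_idem.
- move=> GPP; split; first exact: pow_ann_idem_pi_regular.
  by move=> S S_mult; exact: pow_ann_idem_idem_lift.
- move=> [PR lift]; apply: idem_lift_pi_regular_pow_ann_idem PR.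
  exact: lift _ (@mult_subset_nzd R).
- move=> GPP; split; first exact: pow_ann_idem_pi_regular.
  exact: pow_ann_idem_idem_lift (@mult_subset_nzd R) GPP.
- by move=> [PR lift]; exact: idem_lift_pi_regular_pow_ann_idem.
Qed.
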